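(* A quadratic vector field $v=P\,\partial_x+Q\,\partial_y$ on $\mathbb{C}^2$ with four distinct non-degenerate singular points is Hamiltonian if and only if $\operatorname{tr}Dv(p)=0$ at every singular point $p$. Consequently, the space $\mathcal{H}_2$ of quadratic Hamiltonian vector fields has dimension $9$.
   Context: $v$ is Hamiltonian if $v=H_y\,\partial_x-H_x\,\partial_y$ for some polynomial $H$, equivalently (on $\mathbb{C}^2$) if $P_x+Q_y\equiv0$. $Dv$ is the Jacobian matrix of $(P,Q)$. A singular point $p$ is non-degenerate if $\det Dv(p)\ne0$. The space of quadratic vector fields has dimension 12. *)

From HB Require Import structures.
From mathcomp Require Import all_boot all_order all_algebra.
Set Implicit Arguments. Unset Strict Implicit. Unset Printing Implicit Defensive.
Import Order.TTheory GRing.Theory Num.Theory.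
Local Open Scope ring_scope.

(* A quadratic vector field v = P d/dx + Q d/dy (deg P, deg Q <= 2) is encoded
   by its 12 coefficients, a row vector in 'rV[R]_12 (the 12-dimensional space
   of quadratic vector fields).  With monomial order 1, x, y, x^2, xy, y^2:
     P = v_0 + v_1 x + v_2 y + v_3 x^2 + v_4 xy + v_5 y^2
     Q = v_6 + v_7 x + v_8 y + v_9 x^2 + v_10 xy + v_11 y^2 *)

Section QVF.
Variable R : fieldType.

Definition coefP (v : 'rV[R]_12) (k : nat) : R := v ord0 (inord k).
Definition coefQ (v : 'rV[R]_12) (k : nat) : R := v ord0 (inord (6 + k)).

Definition qeval (c : nat -> R) (x y : R) : R :=
  c 0%N + c 1%N * x + c 2%N * y + c 3%N * x ^+ 2 + c 4%N * x * y + c 5%N * y ^+ 2.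
Definition qdx (c : nat -> R) (x y : R) : R :=
  c 1%N + 2%:R * c 3%N * x + c 4%N * y.
Definition qdy (c : nat -> R) (x y : R) : R :=
  c 2%N + c 4%N * x + 2%:R * c 5%N * y.

Definition Dv (v : 'rV[R]_12) (p : R * R) : 'M[R]_2 :=
  \matrix_(i < 2, j < 2)
    if (i == 0 :> nat) then
      (if (j == 0 :> nat) then qdx (coefP v) p.1 p.2 else qdy (coefP v) p.1 p.2)
    else
      (if (j == 0 :> nat) then qdx (coefQ v) p.1 p.2 else qdy (coefQ v) p.1 p.2).

Definition qvf_singular (v : 'rV[R]_12) (p : R * R) : Prop :=
  qeval (coefP v) p.1 p.2 = 0 /\ qeval (coefQ v) p.1 p.2 = 0.

Definition qvf_nondegenerate (v : 'rV[R]_12) (p : R * R) : Prop :=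
  \det (Dv v p) != 0.

Definition qvf_hamiltonian (v : 'rV[R]_12) : Prop :=
  forall x y : R, qdx (coefP v) x y + qdy (coefQ v) x y = 0.

End QVF.

From HB Require Import structures.
From mathcomp Require Import all_boot all_order all_algebra.
From mathcomp Require Import ring.
Import Order.TTheory GRing.Theory Num.Theory.
Set Implicit Arguments. Unset Strict Implicit.
Local Open Scope ring_scope.

(* The trace of Dv is the divergence P_x + Q_y, an affine function; v is
   Hamiltonian iff it vanishes identically.  If its linear part (b, c) were
   nonzero, the traceless singular points would lie on the line
   b x + c y = const.  A quadratic polynomial vanishing at three distinct points
   of a line vanishes on the whole line, so its derivative along the direction
   (-c, b) vanishes there; applied to P and Q at a singular point p this puts
   (-c, b) in the kernel of Dv(p), contradicting non-degeneracy.  Hence b = c = 0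
   and the constant term is the trace at a singular point, i.e. 0.  The
   divergence coefficients form a surjective linear map onto R^3, so the
   Hamiltonian fields have dimension 12 - 3 = 9. *)

Section TwoByTwo.
Variable R : comPzRingType.

Lemma det_mx2 (M : 'M[R]_2) : \det M = M 0 0 * M 1 1 - M 0 1 * M 1 0.
Proof.
rewrite (expand_det_row _ ord0) !big_ord_recl big_ord0 /cofactor !det_mx11 !mxE /=.
rewrite addr0 expr0 expr1 mul1r mulN1r.
have -> : lift ord0 ord0 = 1 :> 'I_2 by apply/val_inj.
have -> : lift (1 : 'I_2) ord0 = 0 :> 'I_2 by apply/val_inj.
by rewrite mulrN.
Qed.

Lemma mxtrace2 (M : 'M[R]_2) : \tr M = M 0 0 + M 1 1.
Proof.
rewrite /mxtrace !big_ord_recl big_ord0 addr0.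
by have -> : lift ord0 ord0 = 1 :> 'I_2 by apply/val_inj.
Qed.

End TwoByTwo.

Lemma det_mx2_kernel (R : idomainType) (M : 'M[R]_2) (a b : R) :
  \det M != 0 -> M 0 0 * a + M 0 1 * b = 0 -> M 1 0 * a + M 1 1 * b = 0 ->
  a = 0 /\ b = 0.
Proof.
move=> detM row0 row1.
have /eqP : \det M * a = 0.
  have -> : \det M * a = M 1 1 * (M 0 0 * a + M 0 1 * b)
                       - M 0 1 * (M 1 0 * a + M 1 1 * b) by rewrite det_mx2; ring.
  by rewrite row0 row1 !mulr0 subrr.
have /eqP : \det M * b = 0.
  have -> : \det M * b = M 0 0 * (M 1 0 * a + M 1 1 * b)
                       - M 1 0 * (M 0 0 * a + M 0 1 * b) by rewrite det_mx2; ring.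
  by rewrite row0 row1 !mulr0 subrr.
by rewrite !mulf_eq0 (negbTE detM) => /eqP -> /eqP ->.
Qed.

Section QuadraticOnLine.
Variable R : fieldType.
Implicit Types (c : nat -> R) (b e t x y : R).

Lemma qeval_line c x y u w t :
  qeval c (x + u * t) (y + w * t) =
  qeval c x y + t * (u * qdx c x y + w * qdy c x y)
  + t ^+ 2 * (c 3%N * u ^+ 2 + c 4%N * u * w + c 5%N * w ^+ 2).
Proof. by rewrite /qeval /qdx /qdy; ring. Qed.

Lemma line_param b e x1 y1 x y :
  (b != 0) || (e != 0) -> b * (x - x1) + e * (y - y1) = 0 ->
  exists t, x = x1 + - e * t /\ y = y1 + b * t.
Proof.
have param_l b' e' x1' y1' x' y' : b' != 0 ->
    b' * (x' - x1') + e' * (y' - y1') = 0 ->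
    exists t, x' = x1' + - e' * t /\ y' = y1' + b' * t.
  move=> b'0 line; exists ((y' - y1') / b'); split; last by field.
  apply: (mulfI b'0); rewrite [RHS](_ : _ = b' * x1' - e' * (y' - y1')); last by field.
  by apply/eqP; rewrite -subr_eq0 -line; apply/eqP; ring.
case/orP => [b0 line | e0 line]; first exact: param_l.
have [t [-> ->]] : exists t, y = y1 + - b * t /\ x = x1 + e * t.
  by apply: param_l; rewrite // addrC.
by exists (- t); split; ring.
Qed.

Lemma quadratic_lin_coef_eq0 (t2 t3 beta gamma : R) :
  t2 != 0 -> t3 != 0 -> t2 != t3 ->
  t2 * beta + t2 ^+ 2 * gamma = 0 -> t3 * beta + t3 ^+ 2 * gamma = 0 -> beta = 0.
Proof.
have root_factor t : t != 0 -> t * beta + t ^+ 2 * gamma = 0 -> beta + t * gamma = 0.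
  move=> t0 root; have /eqP : t * (beta + t * gamma) = 0 by rewrite -root; ring.
  by rewrite mulf_eq0 (negbTE t0) => /eqP.
move=> t20 t30 t23 /(root_factor _ t20) r2 /(root_factor _ t30) r3.
have /eqP : (t2 - t3) * gamma = 0 by rewrite -[RHS](subrr 0) -{1}r2 -r3; ring.
rewrite mulf_eq0 subr_eq0 (negbTE t23) /= => /eqP g0.
by move: r2; rewrite g0 mulr0 addr0.
Qed.

Lemma qeval_line_deriv_eq0 c b e x1 y1 x2 y2 x3 y3 :
  (b != 0) || (e != 0) ->
  (x1, y1) != (x2, y2) -> (x1, y1) != (x3, y3) -> (x2, y2) != (x3, y3) ->
  b * (x2 - x1) + e * (y2 - y1) = 0 -> b * (x3 - x1) + e * (y3 - y1) = 0 ->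
  qeval c x1 y1 = 0 -> qeval c x2 y2 = 0 -> qeval c x3 y3 = 0 ->
  qdx c x1 y1 * - e + qdy c x1 y1 * b = 0.
Proof.
move=> be0 n12 n13 n23 /(line_param be0)[t2 [? ?]] /(line_param be0)[t3 [? ?]].
subst x2 y2 x3 y3.
have t2_neq0 : t2 != 0 by apply: contraNneq n12 => ->; rewrite !mulr0 !addr0.
have t3_neq0 : t3 != 0 by apply: contraNneq n13 => ->; rewrite !mulr0 !addr0.
have t23 : t2 != t3 by apply: contraNneq n23 => ->.
rewrite !qeval_line => -> r2 r3; rewrite !add0r in r2 r3.
rewrite mulrC [_ * b]mulrC.
exact: quadratic_lin_coef_eq0 t2_neq0 t3_neq0 t23 r2 r3.
Qed.

End QuadraticOnLine.

Section Divergence.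
Variable R : fieldType.
Implicit Types (v : 'rV[R]_12) (p : R * R).

Definition div0 v := coefP v 1 + coefQ v 2.
Definition divx v := 2%:R * coefP v 3 + coefQ v 4.
Definition divy v := coefP v 4 + 2%:R * coefQ v 5.

Lemma divergenceE v x y :
  qdx (coefP v) x y + qdy (coefQ v) x y = div0 v + divx v * x + divy v * y.
Proof. by rewrite /qdx /qdy /div0 /divx /divy; ring. Qed.

Lemma tr_Dv v p : \tr (Dv v p) = div0 v + divx v * p.1 + divy v * p.2.
Proof. by rewrite mxtrace2 !mxE /= divergenceE. Qed.

Lemma qvf_hamiltonianP v :
  qvf_hamiltonian v <-> [/\ div0 v = 0, divx v = 0 & divy v = 0].
Proof.
rewrite /qvf_hamiltonian; split => [div_eq0 | [d0 dx dy] x y]; last first.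
  by rewrite divergenceE d0 dx dy !mul0r !addr0.
have d0 : div0 v = 0 by have := div_eq0 0 0; rewrite divergenceE !mulr0 !addr0.
split => //.
  by have := div_eq0 1 0; rewrite divergenceE d0 mulr1 mulr0 add0r addr0.
by have := div_eq0 0 1; rewrite divergenceE d0 mulr1 mulr0 !add0r.
Qed.

Lemma hamiltonian_of_traceless3 v p1 p2 p3 :
  p1 != p2 -> p1 != p3 -> p2 != p3 ->
  qvf_singular v p1 -> qvf_singular v p2 -> qvf_singular v p3 ->
  qvf_nondegenerate v p1 ->
  \tr (Dv v p1) = 0 -> \tr (Dv v p2) = 0 -> \tr (Dv v p3) = 0 ->
  qvf_hamiltonian v.
Proof.
case: p1 p2 p3 => [x1 y1] [x2 y2] [x3 y3] n12 n13 n23.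
move=> [P1 Q1] [P2 Q2] [P3 Q3] nondeg; rewrite !tr_Dv /= => tr1 tr2 tr3.
suff [dx dy] : divx v = 0 /\ divy v = 0.
  by apply/qvf_hamiltonianP; split; rewrite // -tr1 dx dy !mul0r !addr0.
case: (boolP ((divx v != 0) || (divy v != 0))) => [grad_neq0|]; last first.
  by rewrite negb_or !negbK => /andP[/eqP -> /eqP ->].
have on_line (x y : R) : div0 v + divx v * x + divy v * y = 0 ->
    divx v * (x - x1) + divy v * (y - y1) = 0.
  by move=> tr; rewrite -[RHS](subrr 0) -{1}tr -tr1; ring.
have deriv_eq0 c : qeval c x1 y1 = 0 -> qeval c x2 y2 = 0 -> qeval c x3 y3 = 0 ->
    qdx c x1 y1 * - divy v + qdy c x1 y1 * divx v = 0.
  apply: (qeval_line_deriv_eq0 grad_neq0 n12 n13 n23); exact: on_line.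
have [] := @det_mx2_kernel _ (Dv v (x1, y1)) (- divy v) (divx v) nondeg.
- by rewrite !mxE /=; apply: deriv_eq0.
- by rewrite !mxE /=; apply: deriv_eq0.
by move/eqP; rewrite oppr_eq0 => /eqP dy dx.
Qed.

Definition divcoef v : 'rV[R]_3 := \row_j [:: div0 v; divx v; divy v]`_j.

Lemma divcoef_is_linear : linear divcoef.
Proof.
move=> a u w; apply/rowP => j; rewrite !mxE.
by case: j => [[|[|[|]]] ?] //=; rewrite /div0 /divx /divy /coefP /coefQ !mxE; ring.
Qed.

HB.instance Definition _ :=
  GRing.isLinear.Build R 'rV[R]_12 'rV[R]_3 _ divcoef divcoef_is_linear.

Lemma divcoef_eq0 v : divcoef v = 0 <-> [/\ div0 v = 0, divx v = 0 & divy v = 0].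
Proof.
split => [dv0 | [d0 dx dy]].
  have entry j := congr1 (fun m : 'rV[R]_3 => m 0 j) dv0.
  by move: (entry 0) (entry 1) (entry 2); rewrite !mxE /= => -> -> ->.
by apply/rowP => -[[|[|[|//]]] ?]; rewrite !mxE.
Qed.

Lemma divcoef_surj w : exists v, divcoef v = w.
Proof.
pose v : 'rV[R]_12 := \row_(i < 12)
  if i == 1%N :> nat then w 0 0 else if i == 10%N :> nat then w 0 1
  else if i == 4%N :> nat then w 0 2 else 0.
exists v; apply/rowP => -[[|[|[|//]]] lt_j3];
  rewrite !mxE /div0 /divx /divy /= /coefP /coefQ !mxE !inordK //=;
  rewrite ?mulr0 ?addr0 ?add0r; congr (w _ _); exact: val_inj.
Qed.

Lemma mem_lker_divcoef v : v \in lker (linfun divcoef) <-> qvf_hamiltonian v.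
Proof. by rewrite memv_ker lfunE qvf_hamiltonianP -divcoef_eq0; split => /eqP. Qed.

Lemma dim_lker_divcoef : \dim (lker (linfun divcoef)) = 9%N.
Proof.
have img_full : limg (linfun divcoef) = fullv.
  apply/eqP; rewrite eqEsubv subvf; apply/subvP => w _.
  have [u <-] := divcoef_surj w; rewrite -lfunE; exact: memv_img (memvf u).
have := limg_ker_dim (linfun divcoef) fullv.
rewrite capfv img_full !dimvf !dim_matrix /=.
by move=> dim_sum; apply/eqP; rewrite -(eqn_add2r 3) dim_sum.
Qed.

End Divergence.

Theorem mainTheorem5 (C : numClosedFieldType) :
  (forall v : 'rV[C]_12,
     (exists p1 p2 p3 p4 : C * C,
        uniq [:: p1; p2; p3; p4] /\
        (forall p, p \in [:: p1; p2; p3; p4] ->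
           qvf_singular v p /\ qvf_nondegenerate v p)) ->
     (qvf_hamiltonian v <->
        (forall p : C * C, qvf_singular v p -> \tr (Dv v p) = 0)))
  /\
  (exists U : {vspace 'rV[C]_12},
     (forall v, v \in U <-> qvf_hamiltonian v) /\ \dim U = 9%N).
Proof.
split; last first.
  exists (lker (linfun (@divcoef C))).
  by split; [exact: mem_lker_divcoef | exact: dim_lker_divcoef].
move=> v [p1 [p2 [p3 [p4 [uniq_p sing_nondeg]]]]].
split => [ham p _ | traceless]; first by rewrite tr_Dv -divergenceE; apply: ham.
have [in1 in2 in3] : [/\ p1 \in [:: p1; p2; p3; p4], p2 \in [:: p1; p2; p3; p4]
                        & p3 \in [:: p1; p2; p3; p4]] by rewrite !inE !eqxx !orbT.
have sing p : p \in [:: p1; p2; p3; p4] -> qvf_singular v p by move/sing_nondeg => [].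
move: uniq_p; rewrite /= !inE !negb_or => /andP[/and3P[n12 n13 _] /andP[/andP[n23 _] _]].
apply: (hamiltonian_of_traceless3 n12 n13 n23 (sing _ in1) (sing _ in2) (sing _ in3)
          (sing_nondeg _ in1).2); exact/traceless/sing.
Qed.
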